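(* Let $c\geq 2$ be an integer such that $c+1$ is a prime power. Then $R_{c,c+2}=\frac{c+2}{c}$, i.e., $\lim_{q\to\infty} M_{c,c+2}(q)/q^{2}=\frac{c+2}{c}$.
   Context: For $P\subseteq F^l$ over a finite alphabet $F$, $desc(P)=\{x\in F^l: \text{for every } i\in\{1,\ldots,l\} \text{ there is } y\in P \text{ with } x_i=y_i\}$. For an integer $c\geq 2$, a $c$-frameproof code of length $l$ is a subset $C\subseteq F^l$ with $desc(P)\cap C=P$ for every $P\subseteq C$ with $|P|\leq c$; it is $q$-ary if $|F|=q$. $M_{c,l}(q)$ denotes the largest cardinality of a $q$-ary $c$-frameproof code of length $l$, and $R_{c,l}=\lim_{q\to\infty} M_{c,l}(q)/q^{\lceil l/c\rceil}$ (note $\lceil (c+2)/c\rceil=2$ for $c\geq 2$). *)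

From HB Require Import structures.
From mathcomp Require Import all_boot all_order all_algebra.
From mathcomp Require Import all_classical all_reals topology normedtype sequences.
Set Implicit Arguments. Unset Strict Implicit. Unset Printing Implicit Defensive.

Definition word (q l : nat) := {ffun 'I_l -> 'I_q}.

Definition desc (q l : nat) (P : {set word q l}) : {set word q l} :=
  [set x : word q l | [forall i : 'I_l, [exists y in P, x i == y i]]].

Definition frameproof (c q l : nat) (C : {set word q l}) : bool :=
  [forall P : {set word q l}, (P \subset C) && (#|P| <= c)%N ==> (desc P :&: C == P)].

Definition M (c l q : nat) : nat :=
  \max_(C : {set word q l} | frameproof c C) #|C|.

Definition prime_power (n : nat) : Prop :=
  exists p k : nat, prime p /\ (0 < k)%N /\ n = (p ^ k)%N.

(* Let C be a c-frameproof code of length c + 2 over q symbols.  At most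
   (c + 2) q codewords x are the only codeword with their symbol in some coordinate.  For
   any other x, two disjoint pairs of coordinates cannot both fail to identify x: the two
   codewords agreeing with x on them, together with one codeword agreeing with x at each of
   the c - 2 remaining coordinates, would frame x.  So the ordered pairs not identifying x
   pairwise intersect; as n >= 4 points carry at most 2 (n - 1) such pairs (a star or a
   triangle), at least c (c + 1) of the (c + 2) (c + 1) ordered pairs identify x.  Each
   pair identifies at most q ^ 2 codewords, whence c |C| <= (c + 2) q ^ 2 + c (c + 2) q.

   Let F be a field with c + 1 elements and identify the coordinates with
   the projective line over F.  The codeword labelled (v, s, a, b), s <> 0, has a special
   symbol at v and the symbol (s (i - v), a + b i mod m + 1) at every other point i.  Two
   ordinary coordinates determine the label: (a, b) because differences of coordinates are
   prime to m + 1 when m + 1 = 1 mod (c + 1)!, and (v, s) because the ratios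
   (i - v) / (i - w) are distinct for distinct i.  By pigeonhole the code is c-frameproof;
   it has (c + 2) c (m + 1) ^ 2 words over c (m + 1) + 1 symbols, and taking c (m + 1)
   close to q squeezes M(q) / q ^ 2 to (c + 2) / c. *)

From mathcomp Require Import all_boot all_algebra all_field.
From mathcomp Require Import zify ring.
Import GRing.Theory Num.Theory.
Set Implicit Arguments. Unset Strict Implicit. Unset Printing Implicit Defensive.

Lemma card_sum_in (T : finType) (A : {set T}) (P : pred T) :
  #|[set x in A | P x]| = \sum_(x in A) P x.
Proof.
rewrite -sum1_card (eq_bigl (fun x => (x \in A) && P x)) => [|x]; last by rewrite inE.
by rewrite big_mkcondr; apply: eq_bigr => x _; case: (P x).
Qed.

Lemma double_counting (I J : finType) (A : {set I}) (B : {set J}) (R : I -> J -> bool) a b :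
  (forall i, i \in A -> a <= #|[set j in B | R i j]|) ->
  (forall j, j \in B -> #|[set i in A | R i j]| <= b) ->
  #|A| * a <= #|B| * b.
Proof.
move=> leA leB.
rewrite -!sum_nat_const; apply: (@leq_trans (\sum_(i in A) \sum_(j in B) R i j)).
  by apply: leq_sum => i Ai; rewrite -card_sum_in leA.
by rewrite exchange_big; apply: leq_sum => j Bj; rewrite -card_sum_in leB.
Qed.

Definition ends (T : finType) (p : T * T) : {set T} := [set p.1; p.2].

Definition offdiag (T : finType) (A : {set T}) := [set p in setX A A | p.1 != p.2].

Lemma card_offdiag (T : finType) (A : {set T}) : #|offdiag A| = #|A| * #|A|.-1.
Proof.
have diagA : #|[set p in setX A A | p.1 == p.2]| = #|A|.
  rewrite -(card_imset A (f := fun i => (i, i))) => [|i j [] //].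
  apply: eq_card => -[i j]; rewrite !inE /=.
  apply/idP/imsetP => [/andP[/andP[iA _] /eqP<-] | [k kA [-> ->]]]; first by exists i.
  by rewrite kA eqxx.
have := cardsID [set p | p.1 == p.2] (setX A A).
rewrite cardsX.
have -> : setX A A :&: [set p | p.1 == p.2] = [set p in setX A A | p.1 == p.2].
  by apply/setP => p; rewrite !inE.
have -> : setX A A :\: [set p | p.1 == p.2] = offdiag A.
  by apply/setP => p; rewrite !inE andbC.
by rewrite diagA -subn1 mulnBr muln1; lia.
Qed.

Lemma mem_other_end (T : finType) (u w : T) (B : {set T}) :
  [set u; w] :&: B != set0 -> u \notin B -> w \in B.
Proof. by case/set0Pn => x; rewrite !inE => /andP[/orP[]/eqP-> ->]. Qed.

Section IntersectingPairs.
Variables (T : finType) (N : {set T * T}).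
Hypothesis offdiagN : {in N, forall p, p.1 != p.2}.

Lemma card_pairs_through a : {in N, forall p, a \in ends p} -> #|N| <= 2 * #|T|.-1.
Proof.
move=> aN.
have sub : N \subset setX [set a] [set~ a] :|: setX [set~ a] [set a].
  apply/subsetP => -[u v] pN; have := aN _ pN; have := offdiagN pN.
  by rewrite !inE /= => uv /orP[] /eqP->; rewrite eqxx ?(eq_sym v) uv ?orbT.
apply: leq_trans (subset_leq_card sub) _; apply: leq_trans (leq_card_setU _ _) _.
by rewrite !cardsX cards1 cardsC1; lia.
Qed.

Lemma card_pairs_within (A : {set T}) : {in N, forall p, ends p \subset A} ->
  #|N| <= #|A| * #|A|.-1.
Proof.
move=> NA; rewrite -card_offdiag; apply/subset_leq_card/subsetP => p pN.
have /subsetP pA := NA _ pN.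
by rewrite !inE offdiagN // !pA ?inE ?eqxx ?orbT.
Qed.

Hypothesis intersectingN : {in N &, forall p p', ends p :&: ends p' != set0}.

Lemma ends_sub_triangle p0 p1 p2 r : p0 \in N -> p1 \in N -> p2 \in N -> r \in N ->
  p0.1 \notin ends p1 -> p0.2 \notin ends p2 -> ends r \subset ends p1 :|: ends p2.
Proof.
move=> p0N p1N p2N rN a_p1 b_p2.
have b_p1 : p0.2 \in ends p1 by apply: mem_other_end a_p1; apply: intersectingN.
have a_p2 : p0.1 \in ends p2.
  by apply: (@mem_other_end _ p0.2) b_p2; rewrite setUC; apply: intersectingN.
have endsA u w : [set u; w] = ends r -> u \in ends p1 :|: ends p2.
  move=> uw; apply/negPn/negP; rewrite inE negb_or => /andP[u_p1 u_p2].
  have w_p1 : w \in ends p1 by apply: mem_other_end u_p1; rewrite uw; apply: intersectingN.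
  have w_p2 : w \in ends p2 by apply: mem_other_end u_p2; rewrite uw; apply: intersectingN.
  have w_p0 : w \notin ends p0.
    by rewrite !inE; apply/norP; split; apply/eqP => ew; [move: a_p1 | move: b_p2];
      rewrite -ew ?w_p1 ?w_p2.
  have /mem_other_end/(_ w_p0) : [set w; u] :&: ends p0 != set0.
    by rewrite setUC uw; apply: intersectingN.
  by rewrite !inE => /orP[]/eqP ue; [move: u_p2 | move: u_p1]; rewrite ue ?a_p2 ?b_p1.
by apply/subsetP => u; rewrite in_set2 => /orP[]/eqP->; apply: endsA; rewrite // setUC.
Qed.

Lemma card_intersecting_pairs : 3 < #|T| -> #|N| <= 2 * #|T|.-1.
Proof.
move=> T_gt3; have [->|[p0 p0N]] := set_0Vmem N; first by rewrite cards0.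
have [/forall_inP aN|/forall_inPn[p1 p1N a_p1]] := boolP [forall p in N, p0.1 \in ends p].
  exact: (card_pairs_through aN).
have [/forall_inP bN|/forall_inPn[p2 p2N b_p2]] := boolP [forall p in N, p0.2 \in ends p].
  exact: (card_pairs_through bN).
have card_triangle : #|ends p1 :|: ends p2| <= 3.
  have ends_le2 (p : T * T) : #|ends p| <= 2 by rewrite cards2; case: (_ != _).
  have := cardsUI (ends p1) (ends p2); have := ends_le2 p1; have := ends_le2 p2.
  by have := intersectingN p1N p2N; rewrite -card_gt0; lia.
apply: leq_trans (card_pairs_within (A := ends p1 :|: ends p2) _) _.
  by move=> r rN; apply: (ends_sub_triangle p0N).
have : #|ends p1 :|: ends p2| * #|ends p1 :|: ends p2|.-1 <= 6.
  by case: #|_| card_triangle => [|[|[|[|n]]]].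
lia.
Qed.

End IntersectingPairs.

Section Identification.
Variables (q l : nat).
Implicit Types (C P : {set word q l}) (S : {set 'I_l}) (x y : word q l).

Lemma descP P x : reflect (forall i, exists2 y, y \in P & y i = x i) (x \in desc P).
Proof.
rewrite inE; apply: (iffP forallP) => [xP i | xP i].
  by have /existsP[y /andP[yP /eqP->]] := xP i; exists y.
by have [y yP <-] := xP i; apply/existsP; exists y; rewrite yP eqxx.
Qed.

Lemma frameproofP c C :
  reflect (forall P, P \subset C -> #|P| <= c -> desc P :&: C = P) (frameproof c C).
Proof.
apply: (iffP forallP) => [fpC P PC Pc | fpC P]; first by apply/eqP/(implyP (fpC P)); rewrite PC.
by apply/implyP => /andP[PC Pc]; rewrite fpC.
Qed.

Definition identifies C S x := [forall y in C, [forall i in S, y i == x i] ==> (y == x)].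

Lemma identifiesP C S x :
  reflect (forall y, y \in C -> {in S, forall i, y i = x i} -> y = x) (identifies C S x).
Proof.
apply: (iffP forall_inP) => [idx y yC yS | idx y yC].
  by apply/eqP/(implyP (idx y yC))/forall_inP => i /yS ->.
by apply/implyP => /forall_inP yS; apply/eqP/idx => // i /yS /eqP.
Qed.

Lemma identifiesPn C S x :
  reflect (exists2 y, y \in C & {in S, forall i, y i = x i} /\ y != x) (~~ identifies C S x).
Proof.
apply: (iffP forall_inPn) => [[y yC] | [y yC [yS yx]]].
  by rewrite negb_imply => /andP[/forall_inP yS yx]; exists y => //; split => // i /yS /eqP.
by exists y => //; rewrite negb_imply yx andbT; apply/forall_inP => i /yS ->.
Qed.

Lemma card_identified C S : #|[set x in C | identifies C S x]| <= q ^ #|S|.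
Proof.
pose restr x : {ffun {i | i \in S} -> 'I_q} := [ffun i => x (val i)].
rewrite -(card_in_imset (f := restr)).
  apply: leq_trans (max_card _) _; rewrite card_ffun card_ord card_sig.
  by rewrite (eq_card (B := S)).
move=> x y; rewrite !inE => /andP[xC /identifiesP idx] /andP[yC _] e.
apply/esym/idx => // i iS.
by move/ffunP/(_ (exist _ i iS)): e; rewrite !ffunE.
Qed.

Lemma frameproof_of_identifying_pairs c C (S : word q l -> {set 'I_l}) :
  (forall x, x \in C -> c < #|S x|) ->
  (forall x i j, x \in C -> i \in S x -> j \in S x -> i != j -> identifies C [set i; j] x) ->
  frameproof c C.
Proof.
move=> cardS idS; apply/frameproofP => P PC Pc; apply/setP => x; rewrite inE.
apply/andP/idP => [[/descP xP xC] | xP]; last first.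
  by split; [apply/descP => i; exists x | apply: (subsetP PC)].
have pickP i : {y | (y \in P) && (y i == x i)}.
  by apply: sigW; have [y yP yi] := xP i; exists y; rewrite yP yi eqxx.
have [f fP] := all_sig pickP.
have /dinjectivePn[i iS [j /andP[ji jS] fij]] : ~~ dinjectiveb f (S x).
  apply: contraL (cardS x xC) => /dinjectiveP/card_in_imset <-; rewrite -leqNgt.
  by apply: leq_trans Pc; apply/subset_leq_card/subsetP => _ /imsetP[k _ ->]; case/andP: (fP k).
have /andP[fiP /eqP fii] := fP i; have /andP[_ /eqP fjj] := fP j.
have <- // : f i = x.
apply: (identifiesP _ _ _ (idS x i j xC iS jS _)) (subsetP PC _ fiP) _.
  by rewrite eq_sym.
by move=> k; rewrite !inE => /orP[]/eqP->; rewrite // fij.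
Qed.

Lemma frameproof_identifies c C x A B : frameproof c C -> x \in C ->
  (forall k, ~~ identifies C [set k] x) -> l + 2 <= #|A :|: B| + c ->
  identifies C A x || identifies C B x.
Proof.
move=> /frameproofP fpC xC nid1 cardAB; apply/negPn/negP; rewrite negb_or.
case/andP=> /identifiesPn[y1 y1C [y1A y1x]] /identifiesPn[y2 y2C [y2B y2x]].
have /all_sig[f fP] : forall k, {y | [&& y \in C, y k == x k & y != x]}.
  move=> k; apply: sigW; have /identifiesPn[y yC [yk yx]] := nid1 k.
  by exists y; rewrite yC yx yk ?inE // eqxx.
pose P := y1 |: (y2 |: [set f k | k in ~: (A :|: B)]).
have PC : P \subset C.
  apply/subsetP => y; rewrite !inE => /or3P[/eqP-> | /eqP-> | /imsetP[k _ ->]] //.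
  by case/and3P: (fP k).
have Pc : #|P| <= c.
  have : #|P| <= 2 + #|~: (A :|: B)|.
    apply: leq_trans (leq_card_setU _ _) _; rewrite cards1 add1n ltnS.
    apply: leq_trans (leq_card_setU _ _) _; rewrite cards1 add1n ltnS.
    exact: leq_imset_card.
  by have := cardsC (A :|: B); rewrite card_ord; lia.
have /setP/(_ x) := fpC P PC Pc; rewrite in_setI xC andbT.
have -> : x \in desc P.
  apply/descP => i; have [iA | iNA] := boolP (i \in A); first by exists y1; rewrite ?inE ?eqxx ?y1A.
  have [iB | iNB] := boolP (i \in B); first by exists y2; rewrite ?inE ?eqxx ?orbT ?y2B.
  exists (f i); last by case/and3P: (fP i) => _ /eqP.
  by rewrite !inE imset_f ?orbT // !inE negb_or iNA iNB.
move/esym; rewrite !inE => /or3P[/eqP e1 | /eqP e2 | /imsetP[k _ ek]].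
- by rewrite e1 eqxx in y1x.
- by rewrite e2 eqxx in y2x.
- by case/and3P: (fP k); rewrite -ek eqxx.
Qed.

End Identification.

Lemma card_identifying_pairs c q (C : {set word q c.+2}) x : 2 <= c -> frameproof c C ->
  x \in C -> (forall k, ~~ identifies C [set k] x) ->
  c.+1 * c <= #|[set p in offdiag [set: 'I_c.+2] | identifies C (ends p) x]|.
Proof.
move=> c_ge2 fpC xC nid1; set O := offdiag _.
pose N := [set p in O | ~~ identifies C (ends p) x].
have N_le : #|N| <= 2 * c.+1.
  have := @card_intersecting_pairs _ N; rewrite card_ord; apply=> //.
    by move=> p; rewrite !inE => /andP[/andP[_ ->]].
  move=> p p'; rewrite !inE => /andP[/andP[_ pp] nidp] /andP[/andP[_ pp'] nidp'].
  apply/negP => /eqP disj.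
  suff : identifies C (ends p) x || identifies C (ends p') x.
    by rewrite (negbTE nidp) (negbTE nidp').
  apply: frameproof_identifies fpC xC nid1 _.
  by have := cardsUI (ends p) (ends p'); rewrite disj cards0 !cards2 pp pp'; lia.
have := cardsID [set p | identifies C (ends p) x] O.
rewrite card_offdiag cardsT card_ord.
have -> : O :&: [set p | identifies C (ends p) x] = [set p in O | identifies C (ends p) x].
  by apply/setP => p; rewrite !inE.
have -> : O :\: [set p | identifies C (ends p) x] = N by apply/setP => p; rewrite !inE andbC.
lia.
Qed.

Lemma frameproof_card_le c q (C : {set word q c.+2}) : 2 <= c -> frameproof c C ->
  c * #|C| <= c.+2 * q ^ 2 + c * c.+2 * q.
Proof.
move=> c_ge2 fpC; pose C1 := [set x in C | [exists k, identifies C [set k] x]].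
have C1_le : #|C1| <= c.+2 * q.
  have := @double_counting _ _ C1 [set: 'I_c.+2] (fun x k => identifies C [set k] x) 1 q.
  rewrite muln1 cardsT card_ord; apply.
    move=> x; rewrite inE => /andP[_ /existsP[k idk]].
    by rewrite card_gt0; apply/set0Pn; exists k; rewrite !inE idk.
  move=> k _; have := card_identified C [set k]; rewrite cards1 expn1; apply: leq_trans.
  by apply/subset_leq_card/subsetP => x; rewrite !inE => /andP[/andP[-> _] ->].
have C2_le : #|C :\: C1| * (c.+1 * c) <= c.+2 * c.+1 * q ^ 2.
  have cardO : #|offdiag [set: 'I_c.+2]| = c.+2 * c.+1 by rewrite card_offdiag cardsT card_ord.
  rewrite -cardO.
  apply: (double_counting (R := fun x p => identifies C (ends p) x)).
    move=> x; rewrite !inE => /andP[nid1 xC]; rewrite xC /= negb_exists in nid1.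
    exact/card_identifying_pairs/forallP.
  move=> p; rewrite inE => /andP[_ pp].
  have := card_identified C (ends p); rewrite cards2 pp; apply: leq_trans.
  by apply/subset_leq_card/subsetP => x; rewrite !inE => /andP[/andP[_ ->] ->].
have := cardsID C1 C; rewrite (setIidPr _); last by apply/subsetP => x; rewrite inE => /andP[].
nia.
Qed.

Lemma M_le c q : 2 <= c -> c * M c c.+2 q <= c.+2 * q ^ 2 + c * c.+2 * q.
Proof.
move=> c_ge2; apply: (big_ind (fun n => c * n <= _)) => [|x y | C fpC].
- by rewrite muln0.
- by rewrite maxnMr geq_max => -> ->.
- exact: frameproof_card_le.
Qed.

Lemma coprime_fact_mul_succ n k K : 0 < k <= n -> coprime k (n`! * K).+1.
Proof.
move=> kn; have dk : k %| n`! * K by apply/dvdn_mulr/dvdn_fact.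
by rewrite -addn1 /coprime -(divnK dk) gcdnMDl gcdn1.
Qed.

Lemma sq_le_sq_add q x D : q <= x + D -> q ^ 2 <= x ^ 2 + 2 * D * q.
Proof. by move=> qxD; have [qx | xq] := leqP q x; nia. Qed.

Local Open Scope ring_scope.

Lemma Zp_mulrn_coprime_eq0 m (x : 'I_m.+1) k : coprime k m.+1 -> x *+ k = 0 -> x = 0.
Proof.
move=> cop /(congr1 val); rewrite Zp_mulrn /= => xk0.
have : (m.+1 %| x * k)%N by rewrite /dvdn xk0.
rewrite Gauss_dvdl 1?coprime_sym // /dvdn modn_small ?ltn_ord => [/eqP x0|//].
exact: val_inj.
Qed.

Lemma Zp_line_through_two_points m (a b a' b' : 'I_m.+1) (i j : nat) :
  (i < j)%N -> coprime (j - i) m.+1 ->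
  a + b *+ i = a' + b' *+ i -> a + b *+ j = a' + b' *+ j -> a = a' /\ b = b'.
Proof.
move=> ij cop ei ej.
have shift (u v : 'I_m.+1) : u + v *+ i + v *+ (j - i) = u + v *+ j.
  by rewrite -addrA -mulrnDr subnKC // ltnW.
have eb : b = b'.
  apply/eqP; rewrite -subr_eq0; apply/eqP/(Zp_mulrn_coprime_eq0 cop).
  apply/eqP; rewrite mulrnBl subr_eq0; apply/eqP/(@addrI _ (a + b *+ i)).
  by rewrite shift ei shift.
by split=> //; apply: (addIr (b *+ i)); rewrite ei eb.
Qed.

(* [option F] is the projective line over [F], [None] being the point at infinity. *)
Definition proj_diff (F : fieldType) (u v : option F) : F :=
  if (u, v) is (Some x, Some y) then y - x else 1.

Lemma proj_diff_neq0 (F : fieldType) (u v : option F) : u != v -> proj_diff u v != 0.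
Proof.
case: u => [x|]; case: v => [y|] //= uv; rewrite ?oner_neq0 //.
by rewrite subr_eq0; apply: contraNneq uv => ->.
Qed.

Lemma proj_diff_cross (F : fieldType) (u v i j : option F) :
  u != v -> i != j -> i != u -> i != v -> j != u -> j != v ->
  proj_diff u i * proj_diff v j != proj_diff v i * proj_diff u j.
Proof.
have Some_neq (x y : F) : (Some x != Some y) = (x != y) by [].
case: u => [u|]; case: v => [v|]; case: i => [i|]; case: j => [j|] //=;
rewrite ?Some_neq => uv ij iu iv ju jv; rewrite -subr_eq0 ?mul1r ?mulr1.
- have -> : (i - u) * (j - v) - (i - v) * (j - u) = (i - j) * (u - v) by ring.
  by rewrite mulf_neq0 // subr_eq0.
- have -> : (i - u) - (i - v) = v - u by ring.
  by rewrite subr_eq0 eq_sym.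
- have -> : (j - v) - (j - u) = u - v by ring.
  by rewrite subr_eq0.
- have -> : (i - u) - (j - u) = i - j by ring.
  by rewrite subr_eq0.
- have -> : (j - v) - (i - v) = j - i by ring.
  by rewrite subr_eq0 eq_sym.
Qed.

Section Construction.
Variables (F : finFieldType) (c m q : nat) (σ : 'I_c.+2 -> option F).
Hypotheses (cardF : #|F| = c.+1) (σ_inj : injective σ)
  (coprime_m : forall k, (0 < k < c.+2)%N -> coprime k m.+1).

Local Notation label := ('I_c.+2 * F * 'I_m.+1 * 'I_m.+1)%type.
Local Notation symbol_type := (option (F * 'I_m.+1)).

Definition symbol (d : label) (i : 'I_c.+2) : symbol_type :=
  let: (v, s, a, b) := d in
  if i == v then None else Some (s * proj_diff (σ v) (σ i), a + b *+ i).

Definition labels := [set d : label | d.1.1.2 != 0].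

Lemma symbol_inj2 d d' i j : d \in labels -> d' \in labels -> i != j ->
  symbol d i != None -> symbol d j != None ->
  symbol d i = symbol d' i -> symbol d j = symbol d' j -> d = d'.
Proof.
case: d d' => [[[v s] a] b] [[[w t] a'] b']; rewrite !inE /= => s0 t0 ij.
case: (i =P v) => // /eqP iv _; case: (j =P v) => // /eqP jv _.
case: (i =P w) => // /eqP iw; case: (j =P w) => // /eqP jw.
move=> /Some_inj/eqP; rewrite xpair_eqE => /andP[/eqP eFi /eqP eZi].
move=> /Some_inj/eqP; rewrite xpair_eqE => /andP[/eqP eFj /eqP eZj].
have [-> ->] : a = a' /\ b = b'.
  have := ltn_ord i; have := ltn_ord j.
  case: (ltngtP i j) => [lt_ij | lt_ji | /val_inj eij]; last by rewrite eij eqxx in ij.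
    by move=> *; apply: (Zp_line_through_two_points lt_ij _ eZi eZj); apply: coprime_m; lia.
  by move=> *; apply: (Zp_line_through_two_points lt_ji _ eZj eZi); apply: coprime_m; lia.
have σ_neq x y : x != y -> σ x != σ y by rewrite inj_eq.
have nz x y : x != y -> proj_diff (σ x) (σ y) != 0.
  by move=> xy; apply/proj_diff_neq0/σ_neq.
have [vw|vw] := eqVneq v w.
  by subst w; rewrite (mulIf (nz _ _ _) eFi) // eq_sym.
have := proj_diff_cross (σ_neq _ _ vw) (σ_neq _ _ ij) (σ_neq _ _ iv) (σ_neq _ _ iw)
  (σ_neq _ _ jv) (σ_neq _ _ jw).
case/negP; apply/eqP/(mulfI (mulf_neq0 s0 t0)).
by rewrite mulrACA eFi -eFj; ring.
Qed.

Definition symbols := [set u : symbol_type | if u is Some p then p.1 != 0 else true].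

Lemma None_in_symbols : None \in symbols. Proof. by rewrite inE. Qed.

Lemma symbol_in_symbols d i : d \in labels -> symbol d i \in symbols.
Proof.
case: d => [[[v s] a] b]; rewrite !inE /= => s0; case: eqP => // /eqP iv.
by rewrite mulf_neq0 // proj_diff_neq0 // eq_sym inj_eq.
Qed.

Lemma card_symbols : #|symbols| = (c * m.+1).+1.
Proof.
have -> : symbols = None |: [set Some p | p in setX [set~ 0] [set: 'I_m.+1]].
  apply/setP => -[[x r]|]; rewrite !inE //=.
  by rewrite (mem_imset _ _ (@Some_inj _)) !inE andbT.
rewrite cardsU1 (card_imset _ (@Some_inj _)) cardsX cardsC1 cardsT card_ord cardF.
by case: imsetP => // -[].
Qed.

Hypothesis alphabet_large : (c * m.+1 < q)%N.

Lemma card_symbols_le : (#|symbols| <= q)%N. Proof. by rewrite card_symbols. Qed.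

Definition encode (u : symbol_type) : 'I_q :=
  widen_ord card_symbols_le (enum_rank_in None_in_symbols u).

Lemma encode_inj : {in symbols &, injective encode}.
Proof.
move=> u u' uS u'S /(congr1 val); rewrite /= => /val_inj.
exact: enum_rank_in_inj.
Qed.

Definition codeword (d : label) : word q c.+2 := [ffun i => encode (symbol d i)].

Definition code := [set codeword d | d in labels].

Lemma codeword_eq d d' i : d \in labels -> d' \in labels ->
  (codeword d i == codeword d' i) = (symbol d i == symbol d' i).
Proof. by move=> dI d'I; rewrite !ffunE (inj_in_eq encode_inj) ?symbol_in_symbols. Qed.

Lemma codeword_special d i : d \in labels ->
  (codeword d i != encode None) = (symbol d i != None).
Proof. by move=> dI; rewrite ffunE (inj_in_eq encode_inj) ?symbol_in_symbols ?None_in_symbols. Qed.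

Lemma card_nonspecial d : #|[set i | symbol d i != None]| = c.+1.
Proof.
case: d => [[[v s] a] b]; have -> : [set i | symbol (v, s, a, b) i != None] = [set~ v].
  by apply/setP => i; rewrite !inE /symbol; case: (i == v).
by rewrite cardsC1 card_ord.
Qed.

Lemma card_code : (0 < c)%N -> #|code| = (c.+2 * c * m.+1 ^ 2)%N.
Proof.
move=> c_gt0; rewrite card_in_imset.
  have -> : labels = setX (setX (setX setT [set~ 0]) setT) setT.
    by apply/setP => d; rewrite !inE /= !andbT.
  by rewrite !cardsX !cardsT !card_ord cardsC1 cardF /= mulnA.
move=> d d' dI d'I /ffunP eqdd'.
have /card_gt1P[i [j [iS jS ij]]] : (1 < #|[set i | symbol d i != None]|)%N.
  by rewrite card_nonspecial.
rewrite !inE in iS jS.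
by apply: (symbol_inj2 dI d'I ij) => //; apply/eqP; rewrite -codeword_eq // eqdd'.
Qed.

Lemma frameproof_code : frameproof c code.
Proof.
apply: (frameproof_of_identifying_pairs (S := fun x => [set i | x i != encode None])).
  move=> _ /imsetP[d dI ->]; rewrite (eq_card (B := [set i | symbol d i != None])).
    by rewrite card_nonspecial.
  by move=> i; rewrite !inE codeword_special.
move=> _ i j /imsetP[d dI ->]; rewrite !inE !codeword_special // => iS jS ij.
apply/identifiesP => _ /imsetP[d' d'I ->] agree.
have eq_at k : k \in [set i; j] -> symbol d k = symbol d' k.
  by move=> kij; apply/eqP; rewrite -codeword_eq // agree.
by rewrite (symbol_inj2 dI d'I ij iS jS (eq_at _ _) (eq_at _ _)) // !inE eqxx ?orbT.
Qed.

Lemma M_ge_card_code : (0 < c)%N -> (c.+2 * c * m.+1 ^ 2 <= M c c.+2 q)%N.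
Proof. by move=> c_gt0; rewrite -card_code //; apply: leq_bigmax_cond frameproof_code. Qed.

End Construction.

Lemma M_ge_of_modulus c m q : (0 < c)%N -> prime_power c.+1 ->
  (forall k, (0 < k < c.+2)%N -> coprime k m.+1) -> (c * m.+1 < q)%N ->
  (c.+2 * c * m.+1 ^ 2 <= M c c.+2 q)%N.
Proof.
move=> c_gt0 [p [k [p_pr [k_gt0 c1_pk]]]] cop_m large_q.
have [F _ cardF] := pPrimePowerField p_pr k_gt0.
have card_optF : #|{: option F}| = c.+2 by rewrite card_option cardF c1_pk.
have σ_inj : injective (fun i : 'I_c.+2 => enum_val (cast_ord (esym card_optF) i)).
  by move=> i j /enum_val_inj/cast_ord_inj.
by apply: (M_ge_card_code _ σ_inj) => //; rewrite cardF c1_pk.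
Qed.

Local Close Scope ring_scope.

Lemma M_ge c q : 0 < c -> prime_power c.+1 -> c < q ->
  c.+2 * q ^ 2 <= c * M c c.+2 q + 2 * (c * (c.+1)`!) * c.+2 * q.
Proof.
move=> c_gt0 ppc c_lt_q; set D := c * (c.+1)`!.
have D_gt0 : 0 < D by rewrite muln_gt0 c_gt0 fact_gt0.
(* The modulus m + 1 = (c + 1)! K + 1 is prime to 1, ..., c + 1, with K as large as
   c (m + 1) < q allows. *)
set K := (q - c.+1) %/ D; set m := (c.+1)`! * K.
have cm1 : c * m.+1 = D * K + c by rewrite /m /D mulnS mulnA; lia.
have large_q : c * m.+1 < q.
  by have := leq_trunc_div (q - c.+1) D; rewrite -/K cm1 mulnC; lia.
have close_q : q <= c * m.+1 + D.
  by have := ltn_ceil (q - c.+1) D_gt0; rewrite -/K cm1 mulnC; lia.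
have := M_ge_of_modulus c_gt0 ppc (fun k kc => coprime_fact_mul_succ K kc) large_q.
have := sq_le_sq_add close_q.
move: m.+1 (M c c.+2 q) => m' Mq sq_le Mq_ge.
have cM_ge : c.+2 * (c * m') ^ 2 <= c * Mq.
  have -> : c.+2 * (c * m') ^ 2 = c * (c.+2 * c * m' ^ 2) by ring.
  by rewrite leq_mul2l Mq_ge orbT.
apply: (leq_trans _ (leq_add cM_ge (leqnn _))).
have -> : c.+2 * (c * m') ^ 2 + 2 * D * c.+2 * q = c.+2 * ((c * m') ^ 2 + 2 * D * q) by ring.
by rewrite leq_mul2l sq_le orbT.
Qed.

Local Open Scope ring_scope.

Lemma ler_nat_frac (R : numFieldType) (a b x y : nat) : (0 < b)%N -> (0 < y)%N ->
  (a * y <= x * b)%N -> a%:R / b%:R <= x%:R / y%:R :> R.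
Proof.
move=> b_gt0 y_gt0 le_ay_xb.
by rewrite ler_pdivrMr ?ltr0n // mulrAC ler_pdivlMr ?ltr0n // -!natrM ler_nat.
Qed.

Lemma ratio_le_of_nat (R : realFieldType) (c q Mq : nat) : (0 < c)%N -> (0 < q)%N ->
  (c * Mq <= c.+2 * q ^ 2 + c * c.+2 * q)%N ->
  Mq%:R / (q ^ 2)%:R <= c.+2%:R / c%:R + c.+2%:R / q%:R :> R.
Proof.
move=> c_gt0 q_gt0 le_cM.
have -> : c.+2%:R / c%:R + c.+2%:R / q%:R =
    (c.+2 * q ^ 2 + c * c.+2 * q)%:R / (c * q ^ 2)%:R :> R.
  by field; rewrite !pnatr_eq0 -!lt0n c_gt0 q_gt0.
apply: ler_nat_frac; rewrite ?muln_gt0 ?expn_gt0 ?c_gt0 ?q_gt0 //.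
have -> : (Mq * (c * q ^ 2) = c * Mq * q ^ 2)%N by ring.
by rewrite leq_mul2r le_cM orbT.
Qed.

Lemma ratio_ge_of_nat (R : realFieldType) (c q Mq E : nat) : (0 < c)%N -> (0 < q)%N ->
  (c.+2 * q ^ 2 <= c * Mq + E * q)%N ->
  c.+2%:R / c%:R - E%:R / c%:R / q%:R <= Mq%:R / (q ^ 2)%:R :> R.
Proof.
move=> c_gt0 q_gt0 le_cM; rewrite lerBlDr.
have -> : Mq%:R / (q ^ 2)%:R + E%:R / c%:R / q%:R = (c * Mq + E * q)%:R / (c * q ^ 2)%:R :> R.
  by field; rewrite !pnatr_eq0 -!lt0n c_gt0 q_gt0.
apply: ler_nat_frac; rewrite ?muln_gt0 ?expn_gt0 ?c_gt0 ?q_gt0 //.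
have -> : (c.+2 * (c * q ^ 2) = c.+2 * q ^ 2 * c)%N by ring.
by rewrite leq_mul2r le_cM orbT.
Qed.

From mathcomp Require Import all_classical all_reals topology normedtype sequences.
Import numFieldNormedType.Exports.
Local Open Scope classical_set_scope.
Local Open Scope ring_scope.

Lemma cvgn_of_inv_bounds (R : realType) (u : R ^nat) (l A B : R) :
  (\forall n \near \oo, l - A / n%:R <= u n <= l + B / n%:R) -> u @ \oo --> l.
Proof.
case=> N _ near_u; rewrite -cvg_shiftS.
have cvg_harmonic0 (K : R) : (fun n => K * harmonic n) @ \oo --> 0.
  by rewrite -(mulr0 K); apply: cvgM; [exact: cvg_cst | exact: cvg_harmonic].
apply: (@squeeze_cvgr _ _ _ _ (fun n => l - A * harmonic n) (fun n => l + B * harmonic n)).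
- by exists N => // n /= Nn; apply: near_u; apply: leqW.
- by rewrite -[X in _ --> X]subr0; apply: cvgB; [exact: cvg_cst | exact: cvg_harmonic0].
- by rewrite -[X in _ --> X]addr0; apply: cvgD; [exact: cvg_cst | exact: cvg_harmonic0].
Qed.

Theorem theorem4 (R : realType) (c : nat) :
  (2 <= c)%N -> prime_power c.+1 ->
  (fun q : nat => (M c c.+2 q)%:R / (q ^ 2)%:R : R) @ \oo
    --> ((c.+2)%:R / c%:R : R).
Proof.
move=> c_ge2 ppc; have c_gt0 : (0 < c)%N by apply: leq_trans c_ge2.
apply: (@cvgn_of_inv_bounds _ _ _ ((2 * (c * (c.+1)`!) * c.+2)%:R / c%:R) (c.+2)%:R).
exists c.+1 => // q /= c_lt_q; have q_gt0 : (0 < q)%N by apply: leq_ltn_trans c_lt_q.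
apply/andP; split.
  by apply: ratio_ge_of_nat => //; apply: M_ge.
by apply: ratio_le_of_nat => //; apply: M_le.
Qed.
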